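(* Let $C_1,C_2,\gamma$ be positive real numbers and let $(t_n)_{n\ge1}$ be a sequence of real numbers with $C_1n^\gamma\le t_n\le C_2 n^\gamma$ for all $n\ge1$. Then there exist a constant $C>0$ and an integer $n_0\ge 2$ such that the set $$\bigcap_{n\ge n_0}\Bigl\{\xi\in\mathbb{R}:\ \|\xi t_n\|>\frac{C}{n\log n}\Bigr\}$$ has Hausdorff dimension $1$.
   Context: For a real number $x$, $\|x\|$ denotes the distance from $x$ to the nearest integer. *)

From Stdlib Require Import Reals Lra.
Open Scope R_scope.

Definition dist_int (x : R) : R := Rmin (frac_part x) (1 - frac_part x).

Definition diam_le (U : R -> Prop) (d : R) : Prop :=
  forall x y, U x -> U y -> Rabs (x - y) <= d.

(* The s-dimensional Hausdorff measure of E is zero: for every delta > 0,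
   H^s_delta(E) = inf { sum_n (diam U_n)^s : E ⊆ ∪ U_n, diam U_n <= delta } = 0.
   (Diameters are bounded by positive radii r_n; for s > 0 this gives the same
   infimum.) *)
Definition hausdorff_null (s : R) (E : R -> Prop) : Prop :=
  forall delta eps, 0 < delta -> 0 < eps ->
  exists (U : nat -> R -> Prop) (r : nat -> R),
    (forall n, 0 < r n <= delta /\ diam_le (U n) (r n)) /\
    (forall x, E x -> exists n, U n x) /\
    (forall N, sum_f_R0 (fun n => Rpower (r n) s) N < eps).

Definition hausdorff_dim (E : R -> Prop) (d : R) : Prop :=
  (forall s, 0 <= s -> hausdorff_null s E -> d <= s) /\
  (forall b, (forall s, 0 <= s -> hausdorff_null s E -> b <= s) -> b <= d).

From Stdlib Require Import Reals Lra Lia ClassicalEpsilon List.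
Open Scope R_scope.

(* For s > 1 every subset of R is H^s-null: the intervals
   [c H_k, c H_(k+1)] (H_k harmonic numbers) and their mirror images cover R,
   have lengths c/(k+1), and their s-th powers sum to at most 2 c s/(s-1)
   ([null_for_gt_one]).  Hence the dimension is at most 1.

   A Cantor-type construction: a tree of nested intervals in
   which each level-j cell is cut into [branch (S j)] >= 4 equal children and
   some cells are declared bad, at most one eighth of the grandchildren of any
   cell.  The good cells (not bad, at most half of the children bad) keep at
   least a quarter of their children, so splitting mass equally among good
   children gives a probability with mass <= 4^j / #cells on level-j cells.
   The mass distribution principle, with Heine-Borel compactness of the limit
   set, shows the limit set is not H^s-null once
   4^j * cell_len (j-1)^(1-s) <= 1 for large j ([limit_set_not_null]).

   Level-j cells have length 2^-(A k0 beta^(j+1)); the n in the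
   block [2^(A beta^b), 2^(A beta^(b+1))) are handled at level b, a level-b
   cell being bad when its image under x |-> x t n comes within
   delta n = C/(n ln n) of an integer.  Since t n is comparable to n^gamma,
   these images have length between 1/(number of grandchildren) and delta n,
   so few cells are hit ([hit_count]), and sum delta n over a block is small
   since sum 1/(n ln n) grows like ln ln n ([bad_cell_sparse]).  The limit set
   lies in the set of the theorem ([limit_set_in_E]), and cell lengths decay
   doubly exponentially, giving the dimension condition for every s < 1. *)

(** Finite sums, indicators and counting *)

(* [rsum f n] is f 0 + ... + f (n-1); unlike [sum_f_R0] it allows empty sums,
   which is what block decompositions of index ranges need. *)
Fixpoint rsum (f : nat -> R) (n : nat) : R :=
  match n with O => 0 | S k => rsum f k + f k end.

Lemma rsum_ext f g n : (forall i, (i < n)%nat -> f i = g i) -> rsum f n = rsum g n.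
Proof.
  induction n; simpl; intros H; auto.
  rewrite IHn by (intros; apply H; lia). rewrite H by lia. auto.
Qed.

Lemma rsum_le f g n : (forall i, (i < n)%nat -> f i <= g i) -> rsum f n <= rsum g n.
Proof.
  induction n; simpl; intros H; [lra|].
  assert (f n <= g n) by (apply H; lia).
  assert (rsum f n <= rsum g n) by (apply IHn; intros; apply H; lia).
  lra.
Qed.

Lemma rsum_plus f g n : rsum (fun i => f i + g i) n = rsum f n + rsum g n.
Proof. induction n; simpl; [lra|]. rewrite IHn; lra. Qed.

Lemma rsum_minus f g n : rsum (fun i => f i - g i) n = rsum f n - rsum g n.
Proof. induction n; simpl; [lra|]. rewrite IHn; lra. Qed.

Lemma rsum_scal c f n : rsum (fun i => c * f i) n = c * rsum f n.
Proof. induction n; simpl; [lra|]. rewrite IHn; lra. Qed.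

Lemma rsum_const c n : rsum (fun _ => c) n = INR n * c.
Proof. induction n; simpl rsum; [simpl; lra|]. rewrite IHn, S_INR; lra. Qed.

Lemma rsum_nonneg f n : (forall i, (i < n)%nat -> 0 <= f i) -> 0 <= rsum f n.
Proof.
  intros H. replace 0 with (rsum (fun _ => 0) n) by (rewrite rsum_const; lra).
  apply rsum_le; auto.
Qed.

Lemma rsum_add f m n : rsum f (m + n) = rsum f m + rsum (fun i => f (m + i)%nat) n.
Proof.
  induction n; simpl.
  - rewrite Nat.add_0_r; lra.
  - rewrite Nat.add_succ_r; simpl; rewrite IHn; lra.
Qed.

Lemma rsum_blocks f m R :
  rsum f (m * R) = rsum (fun p => rsum (fun i => f (p * R + i)%nat) R) m.
Proof.
  induction m; simpl; auto.
  rewrite <- IHm, Nat.add_comm. apply rsum_add.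
Qed.

Lemma rsum_swap (f : nat -> nat -> R) m n :
  rsum (fun i => rsum (fun j => f i j) n) m = rsum (fun j => rsum (fun i => f i j) m) n.
Proof.
  induction m; simpl.
  - rewrite rsum_const; lra.
  - rewrite IHm, <- rsum_plus. apply rsum_ext; auto.
Qed.

Lemma rsum_telescope F n : rsum (fun i => F (S i) - F i) n = F n - F O.
Proof. induction n; simpl; [lra|]. rewrite IHn; lra. Qed.

Lemma rsum_single f n i :
  (forall j, (j < n)%nat -> 0 <= f j) -> (i < n)%nat -> f i <= rsum f n.
Proof.
  induction n; intros H Hi; [lia|]. simpl.
  destruct (Nat.eq_dec i n) as [->|Hne].
  - assert (0 <= rsum f n) by (apply rsum_nonneg; intros; apply H; lia). lra.
  - assert (f i <= rsum f n) by (apply IHn; [intros; apply H|]; lia).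
    assert (0 <= f n) by (apply H; lia). lra.
Qed.

Lemma rsum_sum_f_R0 g N : rsum g (S N) = sum_f_R0 g N.
Proof. induction N; simpl; [lra|]. simpl in IHN. rewrite <- IHN. lra. Qed.

Definition ind (P : Prop) : R := if excluded_middle_informative P then 1 else 0.

Lemma ind_T (P : Prop) : P -> ind P = 1.
Proof. unfold ind; destruct (excluded_middle_informative P); tauto. Qed.

Lemma ind_F (P : Prop) : ~ P -> ind P = 0.
Proof. unfold ind; destruct (excluded_middle_informative P); tauto. Qed.

Lemma ind_01 (P : Prop) : 0 <= ind P <= 1.
Proof. unfold ind; destruct (excluded_middle_informative P); lra. Qed.

Lemma ind_imp (P Q : Prop) : (P -> Q) -> ind P <= ind Q.
Proof.
  intros H. unfold ind.
  destruct (excluded_middle_informative P), (excluded_middle_informative Q); try lra; tauto.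
Qed.

Lemma least_ex (P : nat -> Prop) :
  (exists k, P k) -> exists j, P j /\ forall i, (i < j)%nat -> ~ P i.
Proof.
  intros [k Hk]. revert Hk.
  induction k as [k IH] using (well_founded_induction Wf_nat.lt_wf). intros Hk.
  destruct (classic (exists i, (i < k)%nat /\ P i)) as [[i [Hi Pi]]|H].
  - apply (IH i Hi Pi).
  - exists k. split; auto. intros i Hi Pi. apply H. eauto.
Qed.

Lemma eventually_uniform (P : nat -> nat -> Prop) :
  (forall n, exists J, forall L, (J <= L)%nat -> P n L) ->
  forall N, exists J, forall n L, (n <= N)%nat -> (J <= L)%nat -> P n L.
Proof.
  intros H N. induction N as [|N [J1 H1]].
  - destruct (H 0%nat) as [J HJ]. exists J. intros n L Hn HL. replace n with 0%nat by lia. auto.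
  - destruct (H (S N)) as [J2 H2]. exists (Nat.max J1 J2). intros n L Hn HL.
    destruct (Nat.eq_dec n (S N)) as [->|]; [apply H2|apply H1]; lia.
Qed.

Lemma count_int_aux a b Q :
  rsum (fun i => ind (a <= INR i <= b)) Q <= Rmax 0 (Rmin b (INR Q - 1) - a + 1).
Proof.
  induction Q; simpl rsum.
  - unfold Rmax; destruct (Rle_dec 0 _); lra.
  - rewrite S_INR. destruct (classic (a <= INR Q <= b)) as [H|H].
    + rewrite ind_T by auto.
      assert (Rmin b (INR Q - 1) = INR Q - 1) by (apply Rmin_right; lra).
      assert (Rmin b (INR Q + 1 - 1) = INR Q)
        by (replace (INR Q + 1 - 1) with (INR Q) by ring; apply Rmin_right; lra).
      rewrite H0 in IHQ. rewrite H1. unfold Rmax in *.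
      destruct (Rle_dec 0 (INR Q - 1 - a + 1)), (Rle_dec 0 (INR Q - a + 1)); lra.
    + rewrite ind_F by auto.
      assert (Rmin b (INR Q - 1) <= Rmin b (INR Q + 1 - 1)).
      { unfold Rmin; destruct (Rle_dec b (INR Q - 1)), (Rle_dec b (INR Q + 1 - 1)); lra. }
      unfold Rmax in *.
      destruct (Rle_dec 0 (Rmin b (INR Q - 1) - a + 1)),
               (Rle_dec 0 (Rmin b (INR Q + 1 - 1) - a + 1)); lra.
Qed.

Lemma count_int a b Q : a <= b + 1 -> rsum (fun i => ind (a <= INR i <= b)) Q <= b - a + 1.
Proof.
  intros H. eapply Rle_trans; [apply count_int_aux|].
  unfold Rmax, Rmin. destruct (Rle_dec b (INR Q - 1)), (Rle_dec 0 _); lra.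
Qed.

Definition fl (x : R) : R := IZR (Int_part x).

Lemma fl_le x : fl x <= x.
Proof. unfold fl; destruct (base_Int_part x); lra. Qed.

Lemma fl_gt x : x - 1 < fl x.
Proof. unfold fl; destruct (base_Int_part x); lra. Qed.

Lemma fl_int_le (m : Z) x : IZR m <= x -> IZR m <= fl x.
Proof.
  intros H. pose proof (fl_gt x) as Hg. unfold fl in *.
  assert (IZR m < IZR (Int_part x + 1)) by (rewrite plus_IZR; lra).
  apply lt_IZR in H0. apply IZR_le. lia.
Qed.

Lemma fl_mono x y : x <= y -> fl x <= fl y.
Proof. intros. apply fl_int_le. pose proof (fl_le x). unfold fl in *. lra. Qed.

Lemma ind_window_le x h w : 0 < h -> 0 <= w ->
  ind (exists m : Z, x <= IZR m <= x + w) <= fl (x + w) - fl (x - h).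
Proof.
  intros Hh Hw. destruct (classic (exists m : Z, x <= IZR m <= x + w)) as [[m Hm]|H].
  - rewrite ind_T by eauto.
    assert (IZR m <= fl (x + w)) by (apply fl_int_le; lra).
    assert (Hlt : fl (x - h) < IZR m) by (pose proof (fl_le (x - h)); lra).
    unfold fl in *. apply lt_IZR in Hlt.
    assert (Hm1 : (Int_part (x - h) + 1 <= m)%Z) by lia.
    apply IZR_le in Hm1. rewrite plus_IZR in Hm1. lra.
  - rewrite ind_F by auto.
    assert (fl (x - h) <= fl (x + w)) by (apply fl_mono; lra). lra.
Qed.

(* Among M windows of width w <= p h placed with step h, at most
   (p + 1)(M h + 1) contain an integer: each integer is seen by at most p + 1
   windows and the windows cover a range of length about M h. *)
Lemma window_count (x0 h w : R) (M p : nat) : 0 < h -> 0 <= w -> w <= INR p * h ->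
  rsum (fun i => ind (exists m : Z, x0 + INR i * h <= IZR m <= x0 + INR i * h + w)) M
  <= (INR p + 1) * (INR M * h + 1).
Proof.
  intros Hh Hw Hp.
  set (Phi := fun j : nat => fl (x0 + (INR j - 1) * h)).
  apply Rle_trans with
    (rsum (fun i => rsum (fun r => Phi (i + r + 1)%nat - Phi (i + r)%nat) (S p)) M).
  - apply rsum_le; intros i Hi. eapply Rle_trans; [apply (ind_window_le _ h w); auto|].
    replace (rsum (fun r => Phi (i + r + 1)%nat - Phi (i + r)%nat) (S p))
      with (Phi (i + S p)%nat - Phi i).
    + unfold Phi. rewrite !plus_INR, S_INR.
      replace (x0 + (INR i - 1) * h) with (x0 + INR i * h - h) by ring.
      assert (fl (x0 + INR i * h + w) <= fl (x0 + (INR i + (INR p + 1) - 1) * h))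
        by (apply fl_mono; nra).
      lra.
    + replace (Phi i) with (Phi (i + 0)%nat) by (f_equal; lia).
      rewrite <- (rsum_telescope (fun r => Phi (i + r)%nat) (S p)).
      apply rsum_ext; intros. f_equal; f_equal; lia.
  - rewrite rsum_swap.
    replace ((INR p + 1) * (INR M * h + 1)) with (rsum (fun _ => INR M * h + 1) (S p))
      by (rewrite rsum_const, S_INR; ring).
    apply rsum_le; intros r Hr.
    rewrite (rsum_ext _ (fun i => Phi (S (i + r)) - Phi (i + r)%nat))
      by (intros; f_equal; f_equal; lia).
    rewrite (rsum_telescope (fun i => Phi (i + r)%nat)). simpl. unfold Phi.
    pose proof (fl_le (x0 + (INR (M + r) - 1) * h)).
    pose proof (fl_gt (x0 + (INR r - 1) * h)).
    rewrite plus_INR in *. nra.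
Qed.

(** Elementary estimates for ln, exp and Rpower *)

Lemma ln_le_mono x y : 0 < x -> x <= y -> ln x <= ln y.
Proof. intros. destruct (Req_dec x y); [subst; lra|]. left; apply ln_increasing; lra. Qed.

Lemma exp_le_mono x y : x <= y -> exp x <= exp y.
Proof. intros. destruct (Req_dec x y); [subst; lra|]. left; apply exp_increasing; lra. Qed.

Lemma ln_gt1_pos x : 1 < x -> 0 < ln x.
Proof. intros. rewrite <- ln_1. apply ln_increasing; lra. Qed.

Lemma ln_le_lin x : 0 < x -> ln x <= x - 1.
Proof. intros. pose proof (exp_ineq1_le (ln x)). rewrite exp_ln in H0 by lra. lra. Qed.

Lemma ln_diff x y : 0 < y -> y <= x -> (x - y) / x <= ln x - ln y.
Proof.
  intros Hy Hxy.
  pose proof (exp_ineq1_le (ln (y / x))) as H'.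
  rewrite exp_ln in H' by (apply Rdiv_lt_0_compat; lra).
  unfold Rdiv in H'. rewrite ln_mult, ln_Rinv in H' by (try apply Rinv_0_lt_compat; lra).
  replace ((x - y) / x) with (1 - y * / x) by (field; lra). lra.
Qed.

Lemma Rpower_1_base y : Rpower 1 y = 1.
Proof. unfold Rpower. rewrite ln_1, Rmult_0_r, exp_0. auto. Qed.

Lemma Rpower_pos x y : 0 < Rpower x y.
Proof. unfold Rpower; apply exp_pos. Qed.

(* 1/(n ln n) <= ln ln n - ln ln (n-1): the terms of sum 1/(n ln n) telescope. *)
Lemma inv_nlogn_le_lnln_step (n : nat) : (3 <= n)%nat ->
  1 / (INR n * ln (INR n)) <= ln (ln (INR n)) - ln (ln (INR n - 1)).
Proof.
  intros Hn. assert (H3 : 3 <= INR n) by (replace 3 with (INR 3) by (simpl; lra); apply le_INR; auto).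
  assert (L1 : 0 < ln (INR n - 1)) by (apply ln_gt1_pos; lra).
  assert (L2 : ln (INR n - 1) <= ln (INR n)) by (apply ln_le_mono; lra).
  pose proof (ln_diff (ln (INR n)) (ln (INR n - 1)) L1 L2) as Houter.
  pose proof (ln_diff (INR n) (INR n - 1) ltac:(lra) ltac:(lra)) as Hinner.
  replace ((INR n - (INR n - 1)) / INR n) with (1 / INR n) in Hinner by (field; lra).
  eapply Rle_trans; [|apply Houter].
  replace (1 / (INR n * ln (INR n))) with ((1 / INR n) / ln (INR n)) by (field; lra).
  unfold Rdiv. apply Rmult_le_compat_r; [left; apply Rinv_0_lt_compat; lra|].
  unfold Rdiv in Hinner. lra.
Qed.

Lemma sum_inv_nlogn (a k : nat) : (3 <= a)%nat ->
  rsum (fun i => 1 / (INR (a + i) * ln (INR (a + i)))) k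
  <= ln (ln (INR (a + k) - 1)) - ln (ln (INR a - 1)).
Proof.
  intros Ha. induction k.
  - simpl. rewrite Nat.add_0_r. lra.
  - simpl rsum. pose proof (inv_nlogn_le_lnln_step (a + k) ltac:(lia)).
    replace (INR (a + S k) - 1) with (INR (a + k)) by (rewrite Nat.add_succ_r, S_INR; ring).
    lra.
Qed.

(** Upper bound: every subset of R is H^s-null for s > 1 *)

(* Comparison of (x+1)^(-s) with an increment of x^(1-s)/(s-1) (the integral test). *)
Lemma inv_pow_le_increment (x s : R) : 1 <= x -> 1 < s ->
  / Rpower (x + 1) s <= (Rpower x (1 - s) - Rpower (x + 1) (1 - s)) / (s - 1).
Proof.
  intros Hx Hs. unfold Rpower.
  set (a := ln x). set (b := ln (x + 1)).
  assert (Hba : 1 / (x + 1) <= b - a).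
  { unfold a, b. pose proof (ln_diff (x + 1) x ltac:(lra) ltac:(lra)).
    replace ((x + 1 - x) / (x + 1)) with (1 / (x + 1)) in H by (field; lra). lra. }
  assert (E1 : exp ((1 - s) * a) = exp ((1 - s) * b) * exp ((s - 1) * (b - a))).
  { rewrite <- exp_plus. f_equal. ring. }
  assert (E2 : 1 + (s - 1) * (b - a) <= exp ((s - 1) * (b - a))) by apply exp_ineq1_le.
  assert (E3 : exp (- (s * b)) = exp ((1 - s) * b) * / (x + 1)).
  { replace (- (s * b)) with ((1 - s) * b + - b) by ring. rewrite exp_plus. f_equal.
    unfold b. rewrite exp_Ropp, exp_ln by lra. auto. }
  rewrite <- exp_Ropp. fold b. rewrite E3. fold a. rewrite E1.
  pose proof (exp_pos ((1 - s) * b)).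
  apply Rmult_le_reg_r with (s - 1); [lra|].
  replace ((exp ((1 - s) * b) * exp ((s - 1) * (b - a)) - exp ((1 - s) * b)) / (s - 1) * (s - 1))
    with (exp ((1 - s) * b) * (exp ((s - 1) * (b - a)) - 1)) by (field; lra).
  rewrite Rmult_assoc. apply Rmult_le_compat_l; [lra|].
  assert ((s - 1) * (1 / (x + 1)) <= (s - 1) * (b - a)) by (apply Rmult_le_compat_l; lra).
  replace (/ (x + 1) * (s - 1)) with ((s - 1) * (1 / (x + 1))) by (field; lra). lra.
Qed.

Lemma zeta_partial_bound (s : R) (K : nat) : 1 < s ->
  rsum (fun k => / Rpower (INR k + 1) s) K <= s / (s - 1).
Proof.
  intros Hs.
  assert (Hpart : forall K, rsum (fun k => / Rpower (INR k + 1) s) (S K)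
                            <= 1 + (1 - Rpower (INR K + 1) (1 - s)) / (s - 1)).
  { induction K0.
    - simpl rsum. simpl INR. rewrite !Rplus_0_l, !Rpower_1_base.
      replace ((1 - 1) / (s - 1)) with 0 by (field; lra). lra.
    - change (rsum (fun k => / Rpower (INR k + 1) s) (S (S K0))) with
        (rsum (fun k => / Rpower (INR k + 1) s) (S K0) + / Rpower (INR (S K0) + 1) s).
      pose proof (inv_pow_le_increment (INR (S K0)) s
                    ltac:(rewrite S_INR; pose proof (pos_INR K0); lra) Hs).
      rewrite S_INR in *. unfold Rdiv in *. lra. }
  destruct K as [|K]; [simpl; apply Rlt_le, Rdiv_lt_0_compat; lra|].
  eapply Rle_trans; [apply Hpart|].
  pose proof (Rpower_pos (INR K + 1) (1 - s)).
  replace (s / (s - 1)) with (1 + 1 / (s - 1)) by (field; lra). unfold Rdiv.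
  assert (0 < / (s - 1)) by (apply Rinv_0_lt_compat; lra). nra.
Qed.

Lemma harmonic_ln (k : nat) : ln (INR k + 1) <= rsum (fun i => 1 / (INR i + 1)) k.
Proof.
  induction k; simpl rsum.
  - simpl. rewrite Rplus_0_l, ln_1. lra.
  - rewrite S_INR. pose proof (pos_INR k).
    assert (ln (INR k + 1 + 1) - ln (INR k + 1) <= 1 / (INR k + 1)).
    { pose proof (ln_le_lin ((INR k + 1 + 1) / (INR k + 1)) ltac:(apply Rdiv_lt_0_compat; lra)) as Hl.
      unfold Rdiv in Hl. rewrite ln_mult, ln_Rinv in Hl by (try apply Rinv_0_lt_compat; lra).
      replace ((INR k + 1 + 1) * / (INR k + 1) - 1) with (1 / (INR k + 1)) in Hl by (field; lra).
      lra. }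
    lra.
Qed.

(* The points c * H_k (H_k the harmonic numbers) cut [0, +oo) into intervals of
   length c/(k+1); together with their mirror images they cover R. *)
Definition harm_mark (c : R) (k : nat) : R := c * rsum (fun i => 1 / (INR i + 1)) k.

Lemma harm_mark_step c k : harm_mark c (S k) = harm_mark c k + c / (INR k + 1).
Proof. unfold harm_mark. simpl rsum. unfold Rdiv. ring. Qed.

Lemma harm_mark_cover c y : 0 < c -> 0 <= y ->
  exists k, harm_mark c k <= y < harm_mark c (S k).
Proof.
  intros Hc Hy.
  destruct (least_ex (fun k => y < harm_mark c (S k))) as [k [Hk Hmin]].
  { destruct (INR_unbounded (exp (y / c))) as [m Hm]. exists m.
    pose proof (harmonic_ln (S m)) as Hh. rewrite S_INR in Hh.
    assert (Hlt : y / c < ln (INR m + 1)).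
    { rewrite <- (ln_exp (y / c)). apply ln_increasing; [apply exp_pos|lra]. }
    assert (ln (INR m + 1) <= ln (INR m + 1 + 1)) by (apply ln_le_mono; pose proof (pos_INR m); lra).
    unfold harm_mark. apply Rmult_lt_reg_r with (/ c); [apply Rinv_0_lt_compat; lra|].
    rewrite (Rmult_comm c), Rmult_assoc, Rinv_r by lra. unfold Rdiv in Hlt. lra. }
  exists k. split; auto.
  destruct k as [|k].
  - unfold harm_mark. simpl. lra.
  - apply Rnot_lt_le. apply Hmin. lia.
Qed.

(* Interleaving the intervals [c H_k, c H_(k+1)] and their mirror images,
   the s-th powers of the lengths sum to at most 2 c s/(s-1) when c <= 1. *)
Lemma interleaved_power_sum (c s : R) (N : nat) : 0 < c <= 1 -> 1 < s ->
  sum_f_R0 (fun n => Rpower (c / (INR (Nat.div2 n) + 1)) s) N <= 2 * (c * (s / (s - 1))).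
Proof.
  intros Hc Hs.
  assert (Hterm : forall k, Rpower (c / (INR k + 1)) s <= c * / Rpower (INR k + 1) s).
  { intros k. pose proof (pos_INR k). unfold Rdiv.
    rewrite <- Rpower_mult_distr by (try apply Rinv_0_lt_compat; lra).
    replace (Rpower (/ (INR k + 1)) s) with (/ Rpower (INR k + 1) s).
    2:{ unfold Rpower. rewrite ln_Rinv by lra. rewrite <- exp_Ropp. f_equal. ring. }
    apply Rmult_le_compat_r; [left; apply Rinv_0_lt_compat, Rpower_pos|].
    assert (Rpower c (s - 1) <= 1).
    { apply Rle_trans with (Rpower 1 (s - 1));
        [apply Rle_Rpower_l; lra|rewrite Rpower_1_base; lra]. }
    replace s with (1 + (s - 1)) at 1 by ring. rewrite Rpower_plus, Rpower_1 by lra.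
    pose proof (Rpower_pos c (s - 1)). nra. }
  set (f := fun n => Rpower (c / (INR (Nat.div2 n) + 1)) s).
  assert (Hf : forall n, 0 <= f n) by (intros; left; apply Rpower_pos).
  change (sum_f_R0 (fun n => Rpower (c / (INR (Nat.div2 n) + 1)) s) N) with (sum_f_R0 f N).
  rewrite <- rsum_sum_f_R0.
  assert (Hext : rsum f (S N) <= rsum f (S N * 2)).
  { replace (S N * 2)%nat with (S N + S N)%nat by lia. rewrite rsum_add.
    assert (0 <= rsum (fun i => f (S N + i)%nat) (S N)) by (apply rsum_nonneg; auto). lra. }
  eapply Rle_trans; [apply Hext|].
  rewrite rsum_blocks. eapply Rle_trans.
  - apply rsum_le with (g := fun p => 2 * (c * / Rpower (INR p + 1) s)). intros p _.
    simpl. unfold f. replace (p * 2 + 0)%nat with (2 * p)%nat by lia.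
    replace (p * 2 + 1)%nat with (S (2 * p)) by lia.
    rewrite Nat.div2_double, Nat.div2_succ_double. pose proof (Hterm p). lra.
  - rewrite !rsum_scal. apply Rmult_le_compat_l; [lra|]. apply Rmult_le_compat_l; [lra|].
    apply zeta_partial_bound; auto.
Qed.

Theorem null_for_gt_one (s : R) (E : R -> Prop) : 1 < s -> hausdorff_null s E.
Proof.
  intros Hs delta eps Hd He.
  set (c := Rmin (Rmin delta 1) (eps * (s - 1) / (4 * s))).
  assert (Hc0 : 0 < c).
  { unfold c, Rmin. assert (0 < eps * (s - 1) / (4 * s)) by (apply Rdiv_lt_0_compat; nra).
    destruct (Rle_dec delta 1), (Rle_dec _ _); lra. }
  assert (Hcd : c <= delta) by (unfold c; eapply Rle_trans; [apply Rmin_l|apply Rmin_l]).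
  assert (Hc1 : c <= 1) by (unfold c; eapply Rle_trans; [apply Rmin_l|apply Rmin_r]).
  assert (Hce : c <= eps * (s - 1) / (4 * s)) by (unfold c; apply Rmin_r).
  exists (fun n x => (exists k, n = (2 * k)%nat /\ harm_mark c k <= x <= harm_mark c (S k)) \/
                     (exists k, n = S (2 * k) /\ - harm_mark c (S k) <= x <= - harm_mark c k)).
  exists (fun n => c / (INR (Nat.div2 n) + 1)).
  split; [|split].
  - intros n. pose proof (pos_INR (Nat.div2 n)). split; [split|].
    + apply Rdiv_lt_0_compat; lra.
    + apply Rle_trans with c; auto. unfold Rdiv. rewrite <- (Rmult_1_r c) at 2.
      apply Rmult_le_compat_l; [lra|]. rewrite <- Rinv_1. apply Rinv_le_contravar; lra.
    + intros x y [[k [Hk Hx]]|[k [Hk Hx]]] [[k' [Hk' Hy]]|[k' [Hk' Hy]]]; subst; try lia;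
        replace k' with k in * by lia;
        [rewrite Nat.div2_double|rewrite Nat.div2_succ_double];
        rewrite harm_mark_step in *; apply Rabs_le; lra.
  - intros x _. destruct (harm_mark_cover c (Rabs x) Hc0 (Rabs_pos x)) as [k Hk].
    destruct (Rle_dec 0 x).
    + exists (2 * k)%nat. left. exists k. rewrite Rabs_right in Hk by lra. split; auto; lra.
    + exists (S (2 * k)). right. exists k. rewrite Rabs_left in Hk by lra. split; auto; lra.
  - intros N. eapply Rle_lt_trans. { apply interleaved_power_sum; auto; lra. }
    apply Rle_lt_trans with (2 * (eps * (s - 1) / (4 * s) * (s / (s - 1)))).
    + apply Rmult_le_compat_l; [lra|]. apply Rmult_le_compat_r; [|auto].
      apply Rlt_le, Rdiv_lt_0_compat; lra.
    + replace (2 * (eps * (s - 1) / (4 * s) * (s / (s - 1)))) with (eps / 2) by (field; lra). lra.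
Qed.

(** A Cantor-type tree of cells and its natural mass distribution *)

Section CantorTree.

(* A cell of level j has [branch (S j)] children of level j+1; there are
   [ncells j] cells at level j, numbered so that the children of cell u are
   u * branch (S j) + i for i < branch (S j). *)
Variable branch : nat -> nat.
Hypothesis branch_ge4 : forall j, (4 <= branch (S j))%nat.

Fixpoint ncells j : nat :=
  match j with 0 => 1%nat | S j => (ncells j * branch (S j))%nat end.

Variable bad : nat -> nat -> Prop.
Hypothesis bad_level0 : forall a, ~ bad 0 a.
Hypothesis bad_level1 : forall a, ~ bad 1 a.
Hypothesis bad_sparse : forall j u, (u < ncells j)%nat ->
  rsum (fun i => ind (bad (S (S j)) (u * (branch (S j) * branch (S (S j))) + i)%nat))
       (branch (S j) * branch (S (S j)))
  <= INR (branch (S j) * branch (S (S j))) / 8.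

Definition good j a := ~ bad j a /\
  rsum (fun i => ind (bad (S j) (a * branch (S j) + i)%nat)) (branch (S j))
  <= INR (branch (S j)) / 2.

Fixpoint survives j a : Prop :=
  match j with
  | 0 => a = 0%nat
  | S j' => survives j' (a / branch (S j'))%nat /\ good (S j') a
  end.

Lemma branch_pos j : (0 < branch (S j))%nat.
Proof. specialize (branch_ge4 j); lia. Qed.

Lemma INR_branch j : 4 <= INR (branch (S j)).
Proof. replace 4 with (INR 4) by (simpl; lra). apply le_INR, branch_ge4. Qed.

Lemma ncells_pos j : 0 < INR (ncells j).
Proof.
  apply lt_0_INR. induction j; simpl; [lia|]. pose proof (branch_pos j). nia.
Qed.

Lemma div_idx p i n : (i < n)%nat -> ((p * n + i) / n = p)%nat.
Proof. intros. rewrite Nat.div_add_l, Nat.div_small by lia. lia. Qed.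

Lemma survives_lt j a : survives j a -> (a < ncells j)%nat.
Proof.
  revert a; induction j; simpl; intros a H; [lia|].
  destruct H as [H _]. apply IHj in H. pose proof (branch_pos j).
  pose proof (Nat.div_mod a (branch (S j)) ltac:(lia)).
  pose proof (Nat.mod_upper_bound a (branch (S j)) ltac:(lia)). nia.
Qed.

Lemma survives_good j a : survives j a -> good j a.
Proof.
  destruct j; simpl; [|tauto]. intros ->. split; [apply bad_level0|].
  rewrite (rsum_ext _ (fun _ => 0)) by (intros; apply ind_F, bad_level1).
  rewrite rsum_const. pose proof (pos_INR (branch 1)). lra.
Qed.

(* A child fails to be good either because it is removed (at most half of the
   children) or because more than half of its own children are removed, which
   by [bad_sparse] happens for at most a quarter of the children. *)
Lemma good_children j u : (u < ncells j)%nat -> good j u ->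
  INR (branch (S j)) / 4
  <= rsum (fun i => ind (good (S j) (u * branch (S j) + i)%nat)) (branch (S j)).
Proof.
  intros Hu [_ Hg].
  set (R1 := branch (S j)). set (R2 := branch (S (S j))).
  assert (HR2 : 4 <= INR R2) by apply INR_branch.
  set (X := fun i => rsum (fun k => ind (bad (S (S j)) ((u * R1 + i) * R2 + k)%nat)) R2).
  assert (HX : forall i, 0 <= X i) by (intros; apply rsum_nonneg; intros; apply ind_01).
  assert (HX2 : forall i, 0 <= 2 / INR R2 * X i)
    by (intros; apply Rmult_le_pos; auto; apply Rlt_le, Rdiv_lt_0_compat; lra).
  assert (Hpt : forall i, 1 - ind (bad (S j) (u * R1 + i)%nat) - (2 / INR R2) * X i
                          <= ind (good (S j) (u * R1 + i)%nat)).
  { intros i. pose proof (ind_01 (bad (S j) (u * R1 + i)%nat)). specialize (HX2 i).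
    destruct (classic (good (S j) (u * R1 + i)%nat)) as [G|G].
    - rewrite (ind_T (good _ _)) by auto. lra.
    - rewrite (ind_F (good _ _)) by auto.
      apply not_and_or in G. destruct G as [G|G].
      + apply NNPP in G. rewrite (ind_T (bad _ _)) by auto. lra.
      + apply Rnot_le_lt in G. fold R2 in G. change (INR R2 / 2 < X i) in G.
        assert (2 / INR R2 * X i > 1).
        { apply Rmult_lt_reg_r with (INR R2 / 2); [lra|]. field_simplify; lra. }
        lra. }
  eapply Rle_trans; [|apply rsum_le; intros i _; apply Hpt].
  rewrite !rsum_minus, rsum_const, Rmult_1_r, rsum_scal.
  assert (HS : rsum X R1 <= INR R1 * INR R2 / 8).
  { rewrite <- mult_INR.
    unfold X. rewrite (rsum_ext _ (fun p => rsum (fun k =>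
        ind (bad (S (S j)) (u * (R1 * R2) + (p * R2 + k))%nat)) R2)).
    - rewrite <- (rsum_blocks (fun k => ind (bad (S (S j)) (u * (R1 * R2) + k)%nat)) R1 R2).
      apply bad_sparse; auto.
    - intros p _. apply rsum_ext; intros k _. do 2 f_equal. ring. }
  assert (2 / INR R2 * rsum X R1 <= INR R1 / 4).
  { apply Rle_trans with (2 / INR R2 * (INR R1 * INR R2 / 8)).
    - apply Rmult_le_compat_l; [apply Rlt_le, Rdiv_lt_0_compat; lra|auto].
    - right; field; lra. }
  change (rsum (fun i => ind (bad (S j) (u * R1 + i)%nat)) R1 <= INR R1 / 2) in Hg.
  lra.
Qed.

Definition ngood j p := rsum (fun i => ind (good (S j) (p * branch (S j) + i)%nat)) (branch (S j)).

Lemma ngood_ge j p : survives j p -> INR (branch (S j)) / 4 <= ngood j p.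
Proof. intros H. apply good_children; [apply survives_lt|apply survives_good]; auto. Qed.

Fixpoint mu j a : R :=
  match j with
  | 0 => ind (a = 0%nat)
  | S j' => ind (survives (S j') a) * mu j' (a / branch (S j'))%nat
            / ngood j' (a / branch (S j'))%nat
  end.

Lemma mu_zero j a : ~ survives j a -> mu j a = 0.
Proof. destruct j; simpl; intros H; [apply ind_F; auto|]. rewrite ind_F by auto. lra. Qed.

Lemma mu_nonneg j a : 0 <= mu j a.
Proof.
  revert a; induction j; intros a; simpl; [apply ind_01|].
  destruct (classic (survives (S j) a)) as [H|H].
  - rewrite ind_T by auto. simpl in H. pose proof (ngood_ge j _ (proj1 H)).
    pose proof (INR_branch j). specialize (IHj (a / branch (S j))%nat).
    apply Rmult_le_pos; [lra|]. apply Rlt_le, Rinv_0_lt_compat; lra.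
  - rewrite ind_F by auto. lra.
Qed.

(* Since each surviving cell has at least a quarter of good children, a cell
   of level j carries mass at most 4^j / ncells j. *)
Lemma mu_bound j a : mu j a <= 4 ^ j / INR (ncells j).
Proof.
  revert a; induction j; intros a; simpl.
  - pose proof (ind_01 (a = 0%nat)). lra.
  - pose proof (ncells_pos j). pose proof (INR_branch j). rewrite mult_INR.
    destruct (classic (survives (S j) a)) as [Hs|Hs].
    + rewrite ind_T by auto. simpl in Hs. pose proof (ngood_ge j _ (proj1 Hs)).
      specialize (IHj (a / branch (S j))%nat). pose proof (mu_nonneg j (a / branch (S j))%nat).
      apply Rle_trans with ((4 ^ j / INR (ncells j)) / (INR (branch (S j)) / 4)).
      * rewrite Rmult_1_l. unfold Rdiv. apply Rmult_le_compat; auto.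
        -- apply Rlt_le, Rinv_0_lt_compat; lra.
        -- apply Rinv_le_contravar; lra.
      * right. field. lra.
    + rewrite ind_F by auto. unfold Rdiv. rewrite !Rmult_0_l.
      pose proof (pow_le 4 j ltac:(lra)).
      apply Rmult_le_pos; [lra|]. apply Rlt_le, Rinv_0_lt_compat. nra.
Qed.

Lemma mu_children j p :
  rsum (fun i => mu (S j) (p * branch (S j) + i)%nat) (branch (S j)) = mu j p.
Proof.
  rewrite (rsum_ext _ (fun i => ind (survives (S j) (p * branch (S j) + i)%nat) * mu j p / ngood j p))
    by (intros i Hi; simpl; rewrite div_idx by auto; reflexivity).
  destruct (classic (survives j p)) as [H|H].
  - pose proof (ngood_ge j p H). pose proof (INR_branch j).
    rewrite (rsum_ext _ (fun i => mu j p / ngood j p * ind (good (S j) (p * branch (S j) + i)%nat))).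
    + rewrite rsum_scal. fold (ngood j p). field. lra.
    + intros i Hi. simpl survives. rewrite div_idx by auto.
      unfold ind. destruct (excluded_middle_informative (survives j p /\ _)),
                           (excluded_middle_informative (good _ _)); try tauto; field; lra.
  - rewrite mu_zero by auto. rewrite (rsum_ext _ (fun _ => 0)); [rewrite rsum_const; lra|].
    intros i Hi. rewrite ind_F; [lra|]. simpl. rewrite div_idx by auto. tauto.
Qed.

Fixpoint ndesc j L : nat :=
  match L with 0 => 1%nat | S L => (ndesc j L * branch (S (j + L)))%nat end.

Lemma ncells_ndesc j L : ncells (j + L) = (ncells j * ndesc j L)%nat.
Proof.
  induction L; simpl; [rewrite Nat.add_0_r; lia|].
  rewrite Nat.add_succ_r. simpl. rewrite IHL. ring.
Qed.

Lemma ndesc_pos j L : (0 < ndesc j L)%nat.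
Proof. induction L; simpl; [lia|]. pose proof (branch_pos (j + L)). nia. Qed.

Lemma mu_descendants j L u :
  rsum (fun i => mu (j + L) (u * ndesc j L + i)%nat) (ndesc j L) = mu j u.
Proof.
  induction L; simpl.
  - rewrite Nat.add_0_r, Nat.mul_1_r, Nat.add_0_r. lra.
  - rewrite rsum_blocks, <- IHL. apply rsum_ext; intros p Hp.
    rewrite Nat.add_succ_r, <- mu_children. apply rsum_ext; intros i Hi. f_equal. ring.
Qed.

Lemma mass_total L : rsum (mu L) (ncells L) = 1.
Proof.
  pose proof (mu_descendants 0 L 0) as H. pose proof (ncells_ndesc 0 L) as H0.
  simpl in H, H0. rewrite H0, Nat.add_0_r.
  rewrite <- (ind_T (0 = 0)%nat) by auto. rewrite <- H. apply rsum_ext; intros. f_equal.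
Qed.

Variable L0 : R.
Hypothesis L0_pos : 0 < L0.

Definition cell_len j := L0 / INR (ncells j).
Definition cell j a x := INR a * cell_len j <= x <= (INR a + 1) * cell_len j.
Definition Klevel L x := exists a, survives L a /\ cell L a x.
Definition limit_set x := forall L, Klevel L x.

Lemma cell_len_pos j : 0 < cell_len j.
Proof. apply Rdiv_lt_0_compat; auto. apply ncells_pos. Qed.

Lemma cell_len_anti i j : (i <= j)%nat -> cell_len j <= cell_len i.
Proof.
  intros H. unfold cell_len. apply Rmult_le_compat_l; [lra|].
  apply Rinv_le_contravar; [apply ncells_pos|].
  induction H; [lra|]. simpl. rewrite mult_INR.
  pose proof (INR_branch m). pose proof (ncells_pos m). nra.
Qed.

Lemma cell_len_small j : 4 ^ j * cell_len j <= L0.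
Proof.
  assert (H4 : 4 ^ j <= INR (ncells j)).
  { induction j; simpl; [lra|]. rewrite mult_INR.
    pose proof (INR_branch j). pose proof (pow_le 4 j ltac:(lra)). nra. }
  unfold cell_len. pose proof (ncells_pos j).
  apply Rmult_le_reg_r with (INR (ncells j)); [lra|].
  replace (4 ^ j * (L0 / INR (ncells j)) * INR (ncells j)) with (4 ^ j * L0) by (field; lra).
  nra.
Qed.

Lemma cell_sub j L u i x : (i < ndesc j L)%nat ->
  cell (j + L) (u * ndesc j L + i)%nat x -> cell j u x.
Proof.
  intros Hi. unfold cell, cell_len. rewrite ncells_ndesc, !mult_INR, plus_INR, mult_INR.
  assert (HD : 0 < INR (ndesc j L)) by (apply lt_0_INR, ndesc_pos).
  assert (HQ := ncells_pos j).
  assert (Hi' : INR i + 1 <= INR (ndesc j L)) by (rewrite <- S_INR; apply le_INR; lia).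
  pose proof (pos_INR i). pose proof (pos_INR u).
  set (D := INR (ndesc j L)) in *. set (Q := INR (ncells j)) in *.
  assert (Hq : 0 < L0 / (Q * D)) by (apply Rdiv_lt_0_compat; nra).
  intros [H1 H2]. split.
  - eapply Rle_trans; [|apply H1].
    replace ((INR u * D + INR i) * (L0 / (Q * D)))
      with (INR u * (L0 / Q) + INR i * (L0 / (Q * D))) by (field; lra).
    assert (0 <= INR i * (L0 / (Q * D))) by (apply Rmult_le_pos; lra). lra.
  - eapply Rle_trans; [apply H2|].
    replace ((INR u * D + INR i + 1) * (L0 / (Q * D)))
      with (INR u * (L0 / Q) + (INR i + 1) / D * (L0 / Q)) by (field; lra).
    replace ((INR u + 1) * (L0 / Q)) with (INR u * (L0 / Q) + 1 * (L0 / Q)) by ring.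
    apply Rplus_le_compat_l. apply Rmult_le_compat_r; [left; apply Rdiv_lt_0_compat; lra|].
    apply Rmult_le_reg_r with D; auto. unfold Rdiv. rewrite Rmult_assoc, Rinv_l by lra. lra.
Qed.

Lemma Klevel_mono L L' x : (L <= L')%nat -> Klevel L' x -> Klevel L x.
Proof.
  intros H. induction H as [|L' H IH]; auto.
  intros [a [[HT _] Hc]]. apply IH. exists (a / branch (S L'))%nat. split; auto.
  apply (cell_sub L' 1 _ (a mod branch (S L'))%nat).
  - simpl ndesc. rewrite !Nat.add_0_r. apply Nat.mod_upper_bound. pose proof (branch_pos L'). lia.
  - simpl ndesc. rewrite !Nat.add_0_r, Nat.mul_comm, <- Nat.div_mod_eq, Nat.add_1_r. auto.
Qed.

Lemma Klevel_bound L x : Klevel L x -> 0 <= x <= L0.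
Proof.
  intros H. apply (Klevel_mono 0 L) in H; [|lia]. destruct H as [a [Ha Hc]]. simpl in Ha. subst.
  unfold cell, cell_len in Hc. simpl in Hc. lra.
Qed.

Lemma finite_intervals_closed (P : nat -> Prop) (lo hi : nat -> R) N x :
  ~ (exists a, (a < N)%nat /\ P a /\ lo a <= x <= hi a) ->
  exists e, 0 < e /\ forall y, Rabs (y - x) < e ->
    ~ (exists a, (a < N)%nat /\ P a /\ lo a <= y <= hi a).
Proof.
  induction N; intros H.
  - exists 1. split; [lra|]. intros y _ [a [Ha _]]. lia.
  - destruct IHN as [e1 [He1 H1]].
    { intros [a [Ha Hb]]. apply H. exists a. split; auto. }
    destruct (classic (P N)) as [HP|HP].
    + assert (Hx : x < lo N \/ hi N < x).
      { destruct (Rlt_dec x (lo N)); auto. destruct (Rlt_dec (hi N) x); auto.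
        exfalso; apply H. exists N. repeat split; auto; lra. }
      set (e2 := Rmax (lo N - x) (x - hi N)).
      assert (He2 : 0 < e2) by (unfold e2, Rmax; destruct (Rle_dec (lo N - x) (x - hi N)); lra).
      exists (Rmin e1 e2). split; [unfold Rmin; destruct (Rle_dec e1 e2); lra|].
      intros y Hy [a [Ha [Pa Ca]]].
      assert (Y1 : Rabs (y - x) < e1) by (eapply Rlt_le_trans; [apply Hy|apply Rmin_l]).
      assert (Y2 : Rabs (y - x) < e2) by (eapply Rlt_le_trans; [apply Hy|apply Rmin_r]).
      destruct (Nat.eq_dec a N).
      * subst. apply Rabs_def2 in Y2. revert Y2. unfold e2, Rmax.
        destruct (Rle_dec (lo N - x) (x - hi N)); intros; lra.
      * apply (H1 y Y1). exists a. split; auto. lia.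
    + exists e1. split; auto. intros y Hy [a [Ha [Pa Ca]]].
      destruct (Nat.eq_dec a N); [subst; tauto|].
      apply (H1 y Hy). exists a. split; auto. lia.
Qed.

Lemma Klevel_compl_open L x :
  ~ Klevel L x -> exists e, 0 < e /\ forall y, Rabs (y - x) < e -> ~ Klevel L y.
Proof.
  intros H.
  destruct (finite_intervals_closed (survives L) (fun a => INR a * cell_len L)
              (fun a => (INR a + 1) * cell_len L) (ncells L) x) as [e [He He']].
  { intros [a [_ [Pa Ca]]]. apply H. exists a. split; auto. }
  exists e. split; auto. intros y Hy [a [Ta Ca]]. apply (He' y Hy).
  exists a. split; [apply survives_lt|]; auto.
Qed.

Lemma list_bound (g : nat -> R) (Hg : forall a b, g a = g b -> a = b) (l : list R) :
  exists N, forall n, In (g n) l -> (n <= N)%nat.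
Proof.
  induction l as [|y l [N HN]].
  - exists 0%nat. intros n [].
  - destruct (classic (exists m, g m = y)) as [[m Hm]|Hm].
    + exists (Nat.max N m). intros n [H|H].
      * subst. apply Hg in H. subst. lia.
      * apply HN in H. lia.
    + exists N. intros n [H|H]; [exfalso; apply Hm; eauto|auto].
Qed.

(* Compactness (Heine-Borel on [0, L0]): an open cover of the limit set
   already covers, through finitely many members, every level from some on. *)
Lemma limit_set_compact (V : nat -> R -> Prop) : (forall n, open_set (V n)) ->
  (forall x, limit_set x -> exists n, V n x) ->
  exists N L1, forall L x, (L1 <= L)%nat -> Klevel L x -> exists n, (n <= N)%nat /\ V n x.
Proof.
  intros Hop Hcov.
  set (F := mkfamily (fun _ => True)
        (fun y x => (exists n, y = INR n /\ V n x) \/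
                    (exists L, y = - INR L - 1 /\ ~ Klevel L x))
        (fun _ _ => I)).
  assert (HF : covering_open_set (fun c => 0 <= c <= L0) F).
  { split.
    - intros x Hx. destruct (classic (limit_set x)) as [H|H].
      + destruct (Hcov x H) as [n Hn]. exists (INR n). simpl. left. eauto.
      + apply not_all_ex_not in H. destruct H as [L HL].
        exists (- INR L - 1). simpl. right. eauto.
    - intros y x Hx. simpl in Hx. destruct Hx as [[n [Hy Hn]]|[L [Hy HL]]].
      + destruct (Hop n x Hn) as [d Hd]. exists d. intros z Hz. simpl. left. eauto.
      + destruct (Klevel_compl_open L x HL) as [e [He He']].
        exists (mkposreal e He). intros z Hz. simpl. right. exists L. split; auto. }
  destruct (compact_P3 0 L0 F HF) as [D [Hc [l Hl]]].
  destruct (list_bound INR INR_eq l) as [N HN].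
  destruct (list_bound (fun L => - INR L - 1) ltac:(intros a b Hab; apply INR_eq; lra) l)
    as [L1 HL1].
  exists N, L1. intros L x HL Hx.
  destruct (Hc x (Klevel_bound L x Hx)) as [y [Fy Dy]].
  assert (Iy : In y l) by (apply Hl; split; simpl; auto).
  simpl in Fy. destruct Fy as [[n [Hy Hn]]|[L' [Hy HL']]].
  - exists n. split; auto. subst. apply HN; auto.
  - subst. apply HL1 in Iy. exfalso. apply HL'. apply (Klevel_mono L' L); auto. lia.
Qed.

Definition meets (W : R -> Prop) j a := exists x, cell j a x /\ W x.
Definition mass_meeting (W : R -> Prop) j :=
  rsum (fun a => ind (meets W j a) * mu j a) (ncells j).

Lemma mass_meeting_anti W j L : mass_meeting W (j + L) <= mass_meeting W j.
Proof.
  unfold mass_meeting. rewrite ncells_ndesc, rsum_blocks. apply rsum_le; intros u Hu.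
  rewrite <- (mu_descendants j L u), <- rsum_scal. apply rsum_le; intros i Hi.
  apply Rmult_le_compat_r; [apply mu_nonneg|]. apply ind_imp.
  intros [x [Cx Wx]]. exists x. split; auto. eapply cell_sub; eauto.
Qed.

Lemma count_meets W j c rho : 0 < rho -> (forall x, W x -> Rabs (x - c) < rho) ->
  rsum (fun u => ind (meets W j u)) (ncells j) <= 2 * rho / cell_len j + 2.
Proof.
  intros Hr HW. pose proof (cell_len_pos j) as Hl.
  eapply Rle_trans.
  - apply rsum_le with
      (g := fun u => ind ((c - rho) / cell_len j - 1 <= INR u <= (c + rho) / cell_len j)).
    intros u _. apply ind_imp. intros [x [[C1 C2] Wx]].
    specialize (HW x Wx). apply Rabs_def2 in HW.
    split; apply Rmult_le_reg_r with (cell_len j); auto.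
    + replace (((c - rho) / cell_len j - 1) * cell_len j) with (c - rho - cell_len j)
        by (field; lra). lra.
    + replace ((c + rho) / cell_len j * cell_len j) with (c + rho) by (field; lra). lra.
  - eapply Rle_trans; [apply count_int|].
    + assert (0 < rho / cell_len j) by (apply Rdiv_lt_0_compat; auto).
      unfold Rdiv in *. lra.
    + right. field. lra.
Qed.

(* Each surviving cell lies in [Klevel L]; if [Klevel L] is covered by
   V 0, ..., V N, then the masses of cells meeting the V n add up to >= 1. *)
Lemma mass_le_cover (V : nat -> R -> Prop) N L :
  (forall x, Klevel L x -> exists n, (n <= N)%nat /\ V n x) ->
  1 <= rsum (fun n => mass_meeting (V n) L) (S N).
Proof.
  intros HC. rewrite <- (mass_total L). unfold mass_meeting. rewrite rsum_swap.
  apply rsum_le; intros a Ha.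
  destruct (classic (survives L a)) as [HT|HT]; [|rewrite mu_zero by auto; apply rsum_nonneg; intros; lra].
  pose proof (cell_len_pos L).
  assert (Hcell : cell L a (INR a * cell_len L)) by (unfold cell; lra).
  destruct (HC _ (ex_intro _ a (conj HT Hcell))) as [n [Hn Vn]].
  eapply Rle_trans; [|apply (rsum_single _ _ n)]; cbv beta.
  - rewrite ind_T by (exists (INR a * cell_len L); auto). lra.
  - intros; apply Rmult_le_pos; [apply ind_01|apply mu_nonneg].
  - lia.
Qed.

(** The mass distribution principle *)

(* The dimension condition at exponent s: from level J0 on, the growth 4^j of
   the mass bound is compensated by cell_len (j-1)^(1-s). *)
Variables (s : R) (J0 : nat).
Hypothesis s_range : 0 < s < 1.
Hypothesis dim_condition :
  forall j, (J0 < j)%nat -> 4 ^ j * Rpower (cell_len (j - 1)) (1 - s) <= 1.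

Lemma power_gain j rho : (J0 < j)%nat -> 0 < rho <= cell_len (j - 1) ->
  4 ^ j * rho <= Rpower rho s.
Proof.
  intros Hj Hr.
  rewrite <- (Rpower_1 rho) at 1 by lra.
  replace 1 with (s + (1 - s)) at 1 by ring. rewrite Rpower_plus.
  assert (Rpower rho (1 - s) <= Rpower (cell_len (j - 1)) (1 - s)) by (apply Rle_Rpower_l; lra).
  pose proof (Rpower_pos rho s). pose proof (Rpower_pos rho (1 - s)).
  pose proof (dim_condition j Hj). pose proof (pow_le 4 j ltac:(lra)).
  apply Rle_trans with (Rpower rho s * (4 ^ j * Rpower (cell_len (j - 1)) (1 - s))).
  - replace (4 ^ j * (Rpower rho s * Rpower rho (1 - s)))
      with (Rpower rho s * (4 ^ j * Rpower rho (1 - s))) by ring.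
    apply Rmult_le_compat_l; [lra|]. apply Rmult_le_compat_l; lra.
  - rewrite <- (Rmult_1_r (Rpower rho s)) at 2. apply Rmult_le_compat_l; lra.
Qed.

(* A set of diameter < 4 rho, rho small, eventually meets cells of total mass
   O(rho^s): pass to the first level whose cells have length <= 4 rho. *)
Lemma mass_near_ball (W : R -> Prop) c rho : 0 < rho -> 8 * rho <= cell_len J0 ->
  (forall x, W x -> Rabs (x - c) < 2 * rho) ->
  exists J, forall L, (J <= L)%nat -> mass_meeting W L <= 12 / L0 * Rpower rho s.
Proof.
  intros Hr Hr8 HW.
  destruct (least_ex (fun j => cell_len j <= 4 * rho)) as [j [Hj Hmin]].
  { destruct (INR_unbounded (L0 / (4 * rho))) as [k Hk]. exists k.
    assert (Hk4 : INR k <= 4 ^ k).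
    { clear. induction k; [simpl; lra|]. rewrite S_INR. simpl.
      assert (1 <= 4 ^ k) by (apply pow_R1_Rle; lra). lra. }
    pose proof (cell_len_small k). pose proof (cell_len_pos k).
    assert (L0 < 4 * rho * 4 ^ k).
    { replace L0 with (L0 / (4 * rho) * (4 * rho)) by (field; lra). nra. }
    nra. }
  assert (HjJ : (J0 < j)%nat).
  { destruct (Nat.lt_ge_cases J0 j) as [H|H]; auto. pose proof (cell_len_anti _ _ H). lra. }
  assert (Hj1 : 4 * rho < cell_len (j - 1)) by (apply Rnot_le_lt, Hmin; lia).
  exists j. intros L HL. replace L with (j + (L - j))%nat by lia.
  eapply Rle_trans; [apply mass_meeting_anti|].
  assert (Hcount : rsum (fun u => ind (meets W j u)) (ncells j) <= 4 * rho / cell_len j + 2).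
  { replace (4 * rho) with (2 * (2 * rho)) by ring. apply (count_meets W j c); auto; lra. }
  assert (Hmass : mass_meeting W j <= 4 ^ j / INR (ncells j) * rsum (fun u => ind (meets W j u)) (ncells j)).
  { rewrite <- rsum_scal. apply rsum_le; intros. rewrite Rmult_comm.
    apply Rmult_le_compat_r; [apply ind_01|apply mu_bound]. }
  pose proof (ncells_pos j). pose proof (cell_len_pos j). pose proof (pow_le 4 j ltac:(lra)).
  assert (Hq : 4 ^ j / INR (ncells j) = 4 ^ j * cell_len j / L0) by (unfold cell_len; field; lra).
  rewrite Hq in Hmass.
  assert (4 ^ j * cell_len j / L0 * (4 * rho / cell_len j + 2) <= 12 / L0 * (4 ^ j * rho)).
  { replace (4 ^ j * cell_len j / L0 * (4 * rho / cell_len j + 2))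
      with (4 ^ j * (4 * rho + 2 * cell_len j) / L0) by (field; lra).
    replace (12 / L0 * (4 ^ j * rho)) with (4 ^ j * (12 * rho) / L0) by (field; lra).
    apply Rmult_le_compat_r; [left; apply Rinv_0_lt_compat; lra|].
    apply Rmult_le_compat_l; lra. }
  assert (4 ^ j * rho <= Rpower rho s) by (apply power_gain; auto; lra).
  assert (0 < 12 / L0) by (apply Rdiv_lt_0_compat; lra).
  assert (0 <= 4 ^ j * cell_len j / L0) by (apply Rmult_le_pos; [nra|left; apply Rinv_0_lt_compat; lra]).
  assert (4 ^ j * cell_len j / L0 * rsum (fun u => ind (meets W j u)) (ncells j)
          <= 4 ^ j * cell_len j / L0 * (4 * rho / cell_len j + 2))
    by (apply Rmult_le_compat_l; auto).
  nra.
Qed.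

(* Mass distribution principle: the limit set is not H^s-null.  Cover it by
   sets U n of diameter r n; by compactness finitely many of their
   r n-neighbourhoods cover some level, which has total mass 1, while each
   neighbourhood eventually carries mass at most 12/L0 * r n ^ s. *)
Theorem limit_set_not_null : ~ hausdorff_null s limit_set.
Proof.
  intros Hnull. pose proof (cell_len_pos J0).
  destruct (Hnull (cell_len J0 / 8) (L0 / 12)) as [U [r [Hr [Hcov Hsum]]]]; try lra.
  set (V := fun n y => exists x, U n x /\ Rabs (y - x) < r n).
  assert (Hmass : forall n, exists J, forall L, (J <= L)%nat ->
                    mass_meeting (V n) L <= 12 / L0 * Rpower (r n) s).
  { intros n. destruct (Hr n) as [[rpos rle] Hdiam].
    destruct (classic (exists x, U n x)) as [[c Hc]|Hno].
    - apply (mass_near_ball (V n) c (r n)); [lra|lra|].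
      intros y [x [Ux Hyx]]. pose proof (Hdiam x c Ux Hc).
      pose proof (Rabs_triang (y - x) (x - c)). replace (y - x + (x - c)) with (y - c) in * by ring.
      lra.
    - exists 0%nat. intros L _. unfold mass_meeting.
      rewrite (rsum_ext _ (fun _ => 0)), rsum_const.
      + pose proof (Rpower_pos (r n) s). assert (0 < 12 / L0) by (apply Rdiv_lt_0_compat; lra). nra.
      + intros a _. rewrite ind_F; [lra|]. intros [y [_ [x [Ux _]]]]. apply Hno; eauto. }
  assert (Hopen : forall n, open_set (V n)).
  { intros n y [x [Ux Hyx]]. assert (Hd : 0 < r n - Rabs (y - x)) by lra.
    exists (mkposreal _ Hd). intros z Hz. unfold disc in Hz; simpl in Hz. exists x. split; auto.
    pose proof (Rabs_triang (z - y) (y - x)). replace (z - y + (y - x)) with (z - x) in * by ring.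
    lra. }
  assert (HcovV : forall x, limit_set x -> exists n, V n x).
  { intros x Hx. destruct (Hcov x Hx) as [n Hn]. exists n, x.
    rewrite Rminus_diag, Rabs_R0. split; auto. apply Hr. }
  destruct (limit_set_compact V Hopen HcovV) as [N [L1 HC]].
  destruct (eventually_uniform _ Hmass N) as [J HJ].
  set (L := Nat.max J L1).
  pose proof (mass_le_cover V N L (fun x => HC L x ltac:(unfold L; lia))) as Hone.
  assert (rsum (fun n => mass_meeting (V n) L) (S N) <= 12 / L0 * sum_f_R0 (fun n => Rpower (r n) s) N).
  { rewrite <- rsum_sum_f_R0, <- rsum_scal. apply rsum_le; intros n Hn. apply HJ; unfold L; lia. }
  specialize (Hsum N).
  assert (12 / L0 * sum_f_R0 (fun n => Rpower (r n) s) N < 12 / L0 * (L0 / 12))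
    by (apply Rmult_lt_compat_l; [apply Rdiv_lt_0_compat; lra|auto]).
  replace (12 / L0 * (L0 / 12)) with 1 in * by (field; lra). lra.
Qed.

End CantorTree.

(** The construction for theorem7 *)

Section Application.

Variables (C1 C2 gamma : R) (t : nat -> R).
Hypothesis hC1 : 0 < C1.
Hypothesis hgamma : 0 < gamma.
Hypothesis ht : forall n : nat, (1 <= n)%nat ->
  C1 * Rpower (INR n) gamma <= t n <= C2 * Rpower (INR n) gamma.

Variables (k0 beta A : nat).
Hypothesis k0_ge4 : (4 <= k0)%nat.
Hypothesis beta_ge2 : (2 <= beta)%nat.
Hypothesis A_ge6 : (6 <= A)%nat.
Hypothesis k0_large : gamma + 3 <= INR k0.
Hypothesis beta_large : INR k0 + 1 <= gamma * INR beta.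

Definition C_theorem := 1 / (112 * ln (2 * INR beta)).
Hypothesis A_large_C2 : C2 / C_theorem <= 2 ^ A.
Hypothesis A_large_C1 : 1 <= C1 * 2 ^ A.

(* The n in the block [block_start b, block_start (S b)) are handled at level b. *)
Definition block_exp b : nat := (A * beta ^ b)%nat.
Definition block_start b : nat := (2 ^ block_exp b)%nat.

(* Level-j cells have length 2^-(level_exp j), level_exp j = k0 * block_exp (S j);
   so a level-j cell has 2^(level_exp (S j) - level_exp j) children. *)
Definition level_exp j : nat := (A * k0 * beta ^ S j)%nat.
Definition branching j : nat :=
  match j with 0 => 1%nat | S j' => (2 ^ (level_exp (S j') - level_exp j'))%nat end.
Definition base_len : R := / 2 ^ level_exp 0.

Definition delta n := C_theorem / (INR n * ln (INR n)).
Definition hits n b a := exists m : Z,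
  INR a * cell_len branching base_len b * t n - delta n <= IZR m
  <= (INR a + 1) * cell_len branching base_len b * t n + delta n.
Definition bad_cell b a := (2 <= b)%nat /\
  exists n, (block_start b <= n < block_start (S b))%nat /\ hits n b a.

Lemma INR_pow2 m : INR (2 ^ m) = 2 ^ m.
Proof. rewrite pow_INR. replace (INR 2) with 2 by (simpl; lra). auto. Qed.

Lemma pow2_exp m : 2 ^ m = exp (INR m * ln 2).
Proof. rewrite <- Rpower_pow by lra. auto. Qed.

Lemma bpow_pos b : (1 <= beta ^ b)%nat.
Proof. induction b; simpl; nia. Qed.

Lemma level_exp_step j : (level_exp j + 2 <= level_exp (S j))%nat.
Proof.
  unfold level_exp. pose proof (bpow_pos (S j)).
  change (beta ^ S (S j))%nat with (beta * beta ^ S j)%nat. nia.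
Qed.

Lemma level_exp_mono i j : (i <= j)%nat -> (level_exp i <= level_exp j)%nat.
Proof. induction 1; [lia|]. pose proof (level_exp_step m). lia. Qed.

Lemma branching_ge4 j : (4 <= branching (S j))%nat.
Proof.
  simpl. pose proof (level_exp_step j). change 4%nat with (2 ^ 2)%nat.
  apply Nat.pow_le_mono_r; lia.
Qed.

Lemma ncells_eq j : ncells branching j = (2 ^ (level_exp j - level_exp 0))%nat.
Proof.
  induction j; simpl; [rewrite Nat.sub_diag; auto|].
  rewrite IHj, <- Nat.pow_add_r. f_equal.
  pose proof (level_exp_mono 0 j ltac:(lia)). pose proof (level_exp_step j). lia.
Qed.

Lemma cell_len_eq j : cell_len branching base_len j = / 2 ^ level_exp j.
Proof.
  unfold cell_len, base_len. rewrite ncells_eq, INR_pow2.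
  pose proof (level_exp_mono 0 j ltac:(lia)).
  replace (level_exp j) with (level_exp j - level_exp 0 + level_exp 0)%nat at 2 by lia.
  rewrite pow_add. pose proof (pow_lt 2 (level_exp j - level_exp 0) ltac:(lra)).
  pose proof (pow_lt 2 (level_exp 0) ltac:(lra)). field. lra.
Qed.

Lemma base_len_pos : 0 < base_len.
Proof. apply Rinv_0_lt_compat, pow_lt; lra. Qed.

Lemma block_start_ge3 b : (3 <= block_start b)%nat.
Proof.
  unfold block_start, block_exp. pose proof (bpow_pos b).
  apply Nat.le_trans with (2 ^ 2)%nat; [simpl; lia|]. apply Nat.pow_le_mono_r; nia.
Qed.

Lemma block_start_mono b b' : (b <= b')%nat -> (block_start b <= block_start b')%nat.
Proof.
  induction 1; [lia|]. etransitivity; [eassumption|].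
  apply Nat.pow_le_mono_r; [lia|]. unfold block_exp. simpl. nia.
Qed.

Lemma C_theorem_pos : 0 < C_theorem.
Proof.
  unfold C_theorem. apply Rdiv_lt_0_compat; [lra|]. apply Rmult_lt_0_compat; [lra|].
  apply ln_gt1_pos. pose proof (le_INR _ _ beta_ge2). simpl in H. lra.
Qed.

Lemma t_pos n : (1 <= n)%nat -> 0 < t n.
Proof. intros H. destruct (ht n H) as [H1 _]. pose proof (Rpower_pos (INR n) gamma). nra. Qed.

Lemma branching_large j :
  (48 * block_start (S (S (S j))) <= branching (S j) * branching (S (S j)))%nat.
Proof.
  simpl branching. rewrite <- Nat.pow_add_r. unfold block_start.
  apply Nat.le_trans with (2 ^ 6 * 2 ^ block_exp (S (S (S j))))%nat;
    [apply Nat.mul_le_mono_r; simpl; lia|].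
  rewrite <- Nat.pow_add_r. apply Nat.pow_le_mono_r; [lia|].
  pose proof (level_exp_step j). pose proof (level_exp_step (S j)).
  unfold block_exp, level_exp in *. pose proof (bpow_pos (S j)).
  change (beta ^ S (S (S j)))%nat with (beta * (beta * beta ^ S j))%nat in *.
  change (beta ^ S (S j))%nat with (beta * beta ^ S j)%nat in *.
  nia.
Qed.

Lemma beta_ge2_R : 2 <= INR beta.
Proof. replace 2 with (INR 2) by (simpl; lra). apply le_INR; auto. Qed.

Lemma level_margin j : INR (level_exp j) + INR A <= gamma * INR (block_exp (S (S j))).
Proof.
  unfold level_exp, block_exp. rewrite !mult_INR, !pow_INR. simpl pow.
  pose proof beta_ge2_R. pose proof (pos_INR A). pose proof (pos_INR k0).
  assert (1 <= INR beta ^ j) by (apply pow_R1_Rle; lra).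
  set (X := INR beta ^ j) in *.
  assert (HY : 0 <= INR A * INR beta * X) by (apply Rmult_le_pos; [apply Rmult_le_pos|]; lra).
  assert ((INR k0 + 1) * (INR A * INR beta * X) <= gamma * INR beta * (INR A * INR beta * X))
    by (apply Rmult_le_compat_r; lra).
  assert (INR A <= INR A * INR beta * X)
    by (rewrite Rmult_assoc; rewrite <- (Rmult_1_r (INR A)) at 1; apply Rmult_le_compat_l; nra).
  nra.
Qed.

Lemma image_len_ge1 j n : (block_start (S (S j)) <= n)%nat ->
  1 <= cell_len branching base_len j * t n.
Proof.
  intros Hn. pose proof (block_start_ge3 (S (S j))).
  destruct (ht n ltac:(lia)) as [Ht _].
  assert (Hle : INR (block_start (S (S j))) <= INR n) by (apply le_INR; auto).
  assert (Hpow : Rpower (INR (block_start (S (S j)))) gamma <= Rpower (INR n) gamma).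
  { apply Rle_Rpower_l; [lra|]. split; [apply lt_0_INR; lia|auto]. }
  replace (Rpower (INR (block_start (S (S j)))) gamma)
    with (exp (gamma * (INR (block_exp (S (S j))) * ln 2))) in Hpow
    by (unfold block_start; rewrite INR_pow2, pow2_exp; unfold Rpower; rewrite ln_exp; auto).
  assert (Hl2 : 0 < ln 2) by (apply ln_gt1_pos; lra).
  assert (Hexp : 2 ^ level_exp j * 2 ^ A <= exp (gamma * (INR (block_exp (S (S j))) * ln 2))).
  { rewrite !pow2_exp, <- exp_plus. apply exp_le_mono. pose proof (level_margin j). nra. }
  assert (Hp : 0 < 2 ^ level_exp j) by (apply pow_lt; lra).
  assert (HCt : 2 ^ level_exp j <= t n).
  { apply Rle_trans with (C1 * (2 ^ level_exp j * 2 ^ A)); [nra|].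
    apply Rle_trans with (C1 * Rpower (INR n) gamma); auto. apply Rmult_le_compat_l; lra. }
  rewrite cell_len_eq. apply Rmult_le_reg_l with (2 ^ level_exp j); auto.
  rewrite <- Rmult_assoc, Rinv_r by lra. lra.
Qed.

(* t n * n ln n <= C2 n^(k0-1), since gamma <= k0 - 3 and ln n <= n. *)
Lemma t_nlogn_bound n : (3 <= n)%nat -> t n * (INR n * ln (INR n)) <= C2 * INR n ^ (k0 - 1).
Proof.
  intros Hn. assert (Hn3 : 3 <= INR n) by (replace 3 with (INR 3) by (simpl; lra); apply le_INR; auto).
  assert (Hln : 0 < ln (INR n)) by (apply ln_gt1_pos; lra).
  assert (Hlnn : ln (INR n) <= INR n) by (pose proof (ln_le_lin (INR n)); lra).
  destruct (ht n ltac:(lia)) as [Ht1 Ht2].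
  pose proof (Rpower_pos (INR n) gamma).
  assert (HC2 : 0 < C2) by nra.
  assert (Hpw : Rpower (INR n) gamma <= INR n ^ (k0 - 3)).
  { rewrite <- Rpower_pow by lra. apply Rle_Rpower; [lra|].
    rewrite minus_INR by lia. simpl. lra. }
  replace (k0 - 1)%nat with (S (S (k0 - 3))) by lia. simpl pow.
  assert (0 <= INR n ^ (k0 - 3)) by (apply pow_le; lra).
  apply Rle_trans with (C2 * INR n ^ (k0 - 3) * (INR n * INR n)).
  - apply Rmult_le_compat; nra.
  - nra.
Qed.

Lemma image_len_small b n : (block_start b <= n < block_start (S b))%nat ->
  cell_len branching base_len b * t n <= delta n.
Proof.
  intros [Hn1 Hn2]. pose proof (block_start_ge3 b).
  assert (Hn3 : 3 <= INR n) by (replace 3 with (INR 3) by (simpl; lra); apply le_INR; lia).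
  assert (Hln : 0 < ln (INR n)) by (apply ln_gt1_pos; lra).
  assert (Hnl : 0 < INR n * ln (INR n)) by nra.
  set (E := block_exp (S b)).
  assert (HnE : INR n ^ (k0 - 1) <= 2 ^ (E * (k0 - 1))).
  { rewrite pow_mult. apply pow_incr. split; [lra|].
    rewrite <- INR_pow2. apply le_INR. unfold block_start in Hn2. fold E in Hn2. lia. }
  assert (HF : level_exp b = (E * (k0 - 1) + E)%nat).
  { unfold E, level_exp, block_exp. replace k0 with (S (k0 - 1)) at 1 by lia. ring. }
  assert (HEA : 2 ^ A <= 2 ^ E).
  { apply Rle_pow; [lra|]. unfold E, block_exp. pose proof (bpow_pos (S b)). nia. }
  assert (HC2 : C2 <= C_theorem * 2 ^ A).
  { pose proof C_theorem_pos. apply Rmult_le_reg_r with (/ C_theorem); [apply Rinv_0_lt_compat; auto|].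
    replace (C_theorem * 2 ^ A * / C_theorem) with (2 ^ A) by (field; lra). auto. }
  assert (H2E : 0 < 2 ^ E) by (apply pow_lt; lra).
  assert (H2k : 0 < 2 ^ (E * (k0 - 1))) by (apply pow_lt; lra).
  pose proof (t_nlogn_bound n ltac:(lia)) as Htn.
  assert (HC2pos : 0 <= C2).
  { destruct (ht n ltac:(lia)) as [Ht1 Ht2]. pose proof (Rpower_pos (INR n) gamma). nra. }
  unfold delta. apply Rmult_le_reg_r with (INR n * ln (INR n)); [auto|].
  replace (C_theorem / (INR n * ln (INR n)) * (INR n * ln (INR n))) with C_theorem by (field; split; lra).
  rewrite cell_len_eq, HF, pow_add, Rmult_assoc.
  apply Rle_trans with (/ (2 ^ (E * (k0 - 1)) * 2 ^ E) * (C2 * 2 ^ (E * (k0 - 1)))).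
  - apply Rmult_le_compat_l; [left; apply Rinv_0_lt_compat; nra|].
    eapply Rle_trans; [apply Htn|]. apply Rmult_le_compat_l; auto.
  - replace (/ (2 ^ (E * (k0 - 1)) * 2 ^ E) * (C2 * 2 ^ (E * (k0 - 1)))) with (C2 / 2 ^ E)
      by (field; lra).
    apply Rmult_le_reg_r with (2 ^ E); auto. unfold Rdiv. rewrite Rmult_assoc, Rinv_l by lra.
    pose proof C_theorem_pos. nra.
Qed.

(* ln ln grows by at most ln (2 beta) across a block, since
   ln (block_start (S b)) = beta * ln (block_start b). *)
Lemma block_lnln_gap b :
  ln (ln (INR (block_start (S b)) - 1)) - ln (ln (INR (block_start b) - 1)) <= ln (2 * INR beta).
Proof.
  assert (Hl2 : 0 < ln 2) by (apply ln_gt1_pos; lra).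
  assert (HE : 2 <= INR (block_exp b)).
  { replace 2 with (INR 2) by (simpl; lra). apply le_INR.
    unfold block_exp. pose proof (bpow_pos b). nia. }
  assert (HEE : INR (block_exp (S b)) = INR beta * INR (block_exp b))
    by (unfold block_exp; rewrite !mult_INR, !pow_INR; simpl; ring).
  pose proof beta_ge2_R.
  assert (HN : INR (block_start b) = 2 ^ block_exp b) by apply INR_pow2.
  assert (HN' : INR (block_start (S b)) = 2 ^ block_exp (S b)) by apply INR_pow2.
  assert (HN3 : 3 <= INR (block_start b))
    by (replace 3 with (INR 3) by (simpl; lra); apply le_INR, block_start_ge3).
  assert (HN3' : 3 <= INR (block_start (S b)))
    by (replace 3 with (INR 3) by (simpl; lra); apply le_INR, block_start_ge3).
  assert (U1 : ln (INR (block_start (S b)) - 1) <= INR (block_exp (S b)) * ln 2).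
  { rewrite <- ln_pow, <- HN' by lra. apply ln_le_mono; lra. }
  assert (U1p : 0 < ln (INR (block_start (S b)) - 1)) by (apply ln_gt1_pos; lra).
  assert (U2 : INR (block_exp b) * ln 2 / 2 <= ln (INR (block_start b) - 1)).
  { apply Rle_trans with (ln (2 ^ block_exp b / 2)).
    - unfold Rdiv. rewrite ln_mult, ln_pow, ln_Rinv
        by (try apply pow_lt; try apply Rinv_0_lt_compat; lra). nra.
    - apply ln_le_mono; [apply Rdiv_lt_0_compat; [apply pow_lt|]; lra|]. rewrite HN in *. lra. }
  assert (U2p : 0 < INR (block_exp b) * ln 2 / 2) by (apply Rdiv_lt_0_compat; nra).
  assert (ln (ln (INR (block_start (S b)) - 1)) <= ln (INR (block_exp (S b)) * ln 2))
    by (apply ln_le_mono; lra).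
  assert (ln (INR (block_exp b) * ln 2 / 2) <= ln (ln (INR (block_start b) - 1)))
    by (apply ln_le_mono; lra).
  assert (ln (INR (block_exp (S b)) * ln 2) - ln (INR (block_exp b) * ln 2 / 2) = ln (2 * INR beta)).
  { unfold Rminus. rewrite <- ln_Rinv, <- ln_mult by (try apply Rinv_0_lt_compat; nra).
    f_equal. rewrite HEE. field. nra. }
  lra.
Qed.

Lemma block_delta_sum b :
  rsum (fun i => delta (block_start b + i)) (block_start (S b) - block_start b) <= 1 / 112.
Proof.
  pose proof (block_start_ge3 b). pose proof (block_start_mono b (S b) ltac:(lia)).
  unfold delta.
  rewrite (rsum_ext _ (fun i => C_theorem * (1 / (INR (block_start b + i) * ln (INR (block_start b + i))))))
    by (intros; unfold Rdiv; ring).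
  rewrite rsum_scal.
  pose proof (sum_inv_nlogn (block_start b) (block_start (S b) - block_start b) ltac:(lia)) as HB.
  replace (block_start b + (block_start (S b) - block_start b))%nat with (block_start (S b)) in HB
    by lia.
  pose proof (block_lnln_gap b). pose proof C_theorem_pos.
  assert (0 < ln (2 * INR beta)) by (apply ln_gt1_pos; pose proof beta_ge2_R; lra).
  apply Rle_trans with (C_theorem * ln (2 * INR beta)); [apply Rmult_le_compat_l; lra|].
  unfold C_theorem. right. field. lra.
Qed.

Lemma multiple_above h w : 0 < h -> 0 <= w -> exists p : nat, w <= INR p * h < w + h.
Proof.
  intros Hh Hw.
  destruct (least_ex (fun p => w <= INR p * h)) as [p [Hp Hmin]].
  { destruct (INR_unbounded (w / h)) as [k Hk]. exists k.
    apply Rmult_le_reg_r with (/ h); [apply Rinv_0_lt_compat; auto|].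
    rewrite Rmult_assoc, Rinv_r by lra. unfold Rdiv in Hk. lra. }
  exists p. split; auto. destruct p as [|p]; [simpl in *; lra|].
  assert (~ w <= INR p * h) by (apply Hmin; lia). rewrite S_INR. lra.
Qed.

Lemma grandchild_len j :
  INR (branching (S j) * branching (S (S j))) * cell_len branching base_len (S (S j))
  = cell_len branching base_len j.
Proof.
  unfold cell_len.
  change (ncells branching (S (S j)))
    with (ncells branching j * branching (S j) * branching (S (S j)))%nat.
  rewrite !mult_INR.
  pose proof (ncells_pos branching branching_ge4 j).
  pose proof (INR_branch branching branching_ge4 j).
  pose proof (INR_branch branching branching_ge4 (S j)).
  field. repeat split; lra.
Qed.

(* For n in block j+2, among the M grandchildren of a level-j cell at most
   7 M delta n + 3 are hit: their images are consecutive intervals of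
   length h <= delta n with M h >= 1, so integers are hit at most
   (3 + 2 delta n / h) times each, over a range of length M h. *)
Lemma hit_count j u n : (block_start (S (S j)) <= n < block_start (S (S (S j))))%nat ->
  rsum (fun i => ind (hits n (S (S j)) (u * (branching (S j) * branching (S (S j))) + i)%nat))
       (branching (S j) * branching (S (S j)))
  <= 7 * INR (branching (S j) * branching (S (S j))) * delta n + 3.
Proof.
  intros Hn. set (b := S (S j)). set (M := (branching (S j) * branching b)%nat).
  pose proof (block_start_ge3 b).
  assert (Htn : 0 < t n) by (apply t_pos; unfold b in *; lia).
  pose proof (cell_len_pos branching branching_ge4 base_len base_len_pos b) as Hlen.
  set (h := cell_len branching base_len b * t n).
  assert (Hh : 0 < h) by (unfold h; nra).
  assert (Hhd : h <= delta n) by (apply image_len_small; auto).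
  assert (Hd : 0 < delta n) by lra.
  assert (HMh : 1 <= INR M * h)
    by (unfold h, M, b; rewrite <- Rmult_assoc, grandchild_len; apply image_len_ge1; lia).
  set (w := h + 2 * delta n).
  destruct (multiple_above h w Hh ltac:(unfold w; lra)) as [p [Hp1 Hp2]].
  assert (Hp : INR p + 1 <= 3 + 2 * delta n / h).
  { apply Rmult_le_reg_r with h; auto.
    replace ((3 + 2 * delta n / h) * h) with (w + 2 * h) by (unfold w; field; lra). lra. }
  apply Rle_trans with
    (rsum (fun i => ind (exists m : Z, (INR (u * M) * h - delta n) + INR i * h <= IZR m
                                      <= (INR (u * M) * h - delta n) + INR i * h + w)) M).
  { apply rsum_le; intros i _. apply ind_imp. intros [m Hm]. exists m.
    fold M in Hm. rewrite plus_INR in Hm. unfold w, h. split; nra. }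
  eapply Rle_trans; [apply window_count with (p := p); auto; unfold w; lra|].
  assert (Hinv : / h <= INR M) by (apply Rmult_le_reg_r with h; auto; rewrite Rinv_l; lra).
  apply Rle_trans with ((3 + 2 * delta n / h) * (INR M * h + 1)); [apply Rmult_le_compat_r; lra|].
  unfold Rdiv. replace ((3 + 2 * delta n * / h) * (INR M * h + 1))
    with (3 * (INR M * h) + 3 + 2 * delta n * INR M + 2 * delta n * / h) by (field; lra).
  assert (INR M * h <= INR M * delta n) by (apply Rmult_le_compat_l; [apply pos_INR|lra]).
  assert (delta n * / h <= delta n * INR M) by (apply Rmult_le_compat_l; lra).
  change (INR (branching (S j) * branching b)) with (INR M). lra.
Qed.

Lemma bad_cell_union b a :
  ind (bad_cell b a)
  <= rsum (fun k => ind (hits (block_start b + k) b a)) (block_start (S b) - block_start b).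
Proof.
  destruct (classic (bad_cell b a)) as [Hbad|Hbad].
  - rewrite ind_T by auto. destruct Hbad as [_ [n [Hn Hh]]].
    eapply Rle_trans; [|apply (rsum_single _ _ (n - block_start b)); [intros; apply ind_01|lia]].
    cbv beta. rewrite ind_T; [lra|]. replace (block_start b + (n - block_start b))%nat with n by lia.
    auto.
  - rewrite ind_F by auto. apply rsum_nonneg; intros; apply ind_01.
Qed.

(* At most one eighth of the grandchildren of any level-j cell are bad:
   summing [hit_count] over block j+2 gives 7 M sum(delta) + 3 * block length,
   which is <= M/16 + M/16 by [block_delta_sum] and [branching_large]. *)
Lemma bad_cell_sparse j u :
  rsum (fun i => ind (bad_cell (S (S j)) (u * (branching (S j) * branching (S (S j))) + i)%nat))
       (branching (S j) * branching (S (S j)))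
  <= INR (branching (S j) * branching (S (S j))) / 8.
Proof.
  set (b := S (S j)). set (M := (branching (S j) * branching b)%nat).
  set (K := (block_start (S b) - block_start b)%nat).
  eapply Rle_trans; [apply rsum_le; intros i _; apply bad_cell_union|].
  rewrite rsum_swap.
  eapply Rle_trans.
  { apply rsum_le with (g := fun k => 7 * INR M * delta (block_start b + k) + 3).
    intros k Hk. apply hit_count. unfold K, b in *. pose proof (block_start_mono b (S b)). lia. }
  rewrite rsum_plus, rsum_const, rsum_scal. fold K.
  pose proof (block_delta_sum b) as Hdelta. fold K in Hdelta.
  assert (HK : 48 * INR K <= INR M).
  { replace 48 with (INR 48) by (simpl; lra). rewrite <- mult_INR. apply le_INR.
    pose proof (branching_large j). unfold K, M, b. lia. }
  assert (INR M * rsum (fun k => delta (block_start b + k)) K <= INR M * (1 / 112))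
    by (apply Rmult_le_compat_l; [apply pos_INR|auto]).
  lra.
Qed.

Lemma bad_cell_level0 a : ~ bad_cell 0 a.
Proof. intros [H _]. exact (Nat.nle_succ_0 1 H). Qed.

Lemma bad_cell_level1 a : ~ bad_cell 1 a.
Proof. intros [H _]. exact (Nat.nle_succ_diag_l 1 H). Qed.

Lemma block_of n : (block_start 2 <= n)%nat ->
  exists b, (2 <= b)%nat /\ (block_start b <= n < block_start (S b))%nat.
Proof.
  intros Hn.
  destruct (least_ex (fun b => (n < block_start (S b))%nat)) as [b [Hb1 Hb2]].
  { exists n. unfold block_start, block_exp.
    apply Nat.lt_le_trans with (2 ^ n)%nat; [apply Nat.pow_gt_lin_r; lia|].
    apply Nat.pow_le_mono_r; [lia|]. pose proof (Nat.pow_gt_lin_r beta (S n) ltac:(lia)). nia. }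
  exists b. assert (Hb : (2 <= b)%nat).
  { destruct (Nat.lt_ge_cases b 2); auto. pose proof (block_start_mono (S b) 2 ltac:(lia)). lia. }
  repeat split; auto. destruct b as [|b]; [lia|].
  destruct (Nat.lt_ge_cases n (block_start (S b))); auto. exfalso. apply (Hb2 b); auto.
Qed.

Lemma dist_int_hit (y d : R) : dist_int y <= d -> exists m : Z, y - d <= IZR m <= y + d.
Proof.
  unfold dist_int, frac_part. intros H. pose proof (base_Int_part y) as [B1 B2].
  unfold Rmin in H. destruct (Rle_dec (y - IZR (Int_part y)) (1 - (y - IZR (Int_part y)))).
  - exists (Int_part y). lra.
  - exists (Int_part y + 1)%Z. rewrite plus_IZR. lra.
Qed.

(* The limit set lies in the set E of the theorem (with n0 = block_start 2):
   if ||x t n|| <= delta n, the level-b cell of x, b the block of n, is hit. *)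
Lemma limit_set_in_E x : limit_set branching bad_cell base_len x ->
  forall n, (block_start 2 <= n)%nat -> dist_int (x * t n) > delta n.
Proof.
  intros HK n Hn. destruct (block_of n Hn) as [b [Hb2 Hb]].
  destruct (HK b) as [a [Ta [Ca1 Ca2]]].
  destruct (survives_good _ _ bad_cell_level0 bad_cell_level1 b a Ta) as [Hgood _].
  apply Rnot_le_lt. intros Hd. apply Hgood. split; auto. exists n. split; auto.
  destruct (dist_int_hit _ _ Hd) as [m Hm]. exists m.
  assert (Htn : 0 < t n) by (apply t_pos; pose proof (block_start_ge3 2); lia).
  split.
  - apply Rle_trans with (x * t n - delta n); [|lra].
    apply Rplus_le_compat_r. apply Rmult_le_compat_r; lra.
  - apply Rle_trans with (x * t n + delta n); [lra|].
    apply Rplus_le_compat_r. apply Rmult_le_compat_r; lra.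
Qed.

Lemma sq_le_pow2 j : INR j * INR j <= 2 * 2 ^ j.
Proof.
  induction j; [simpl; lra|].
  destruct (Nat.lt_ge_cases j 3).
  - destruct j as [|[|[|j]]]; simpl; lra || lia.
  - rewrite S_INR. simpl.
    assert (3 <= INR j) by (replace 3 with (INR 3) by (simpl; lra); apply le_INR; auto). nra.
Qed.

(* The dimension condition holds for every s < 1: cell lengths decay doubly
   exponentially, 2^-(level_exp (j-1)) with level_exp (j-1) >= 2^j. *)
Lemma dimension_condition s : 0 < s < 1 -> exists J0, forall j, (J0 < j)%nat ->
  4 ^ j * Rpower (cell_len branching base_len (j - 1)) (1 - s) <= 1.
Proof.
  intros Hs. destruct (INR_unbounded (4 / (1 - s))) as [J0 HJ0]. exists J0. intros j Hj.
  assert (HjR : 4 / (1 - s) < INR j) by (apply Rlt_le_trans with (INR J0); auto; apply le_INR; lia).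
  assert (H4 : 4 <= (1 - s) * INR j).
  { apply Rmult_lt_compat_r with (r := 1 - s) in HjR; [|lra].
    replace (4 / (1 - s) * (1 - s)) with 4 in HjR by (field; lra). lra. }
  assert (HF : 2 ^ j <= INR (level_exp (j - 1))).
  { rewrite <- INR_pow2. apply le_INR. unfold level_exp. replace (S (j - 1)) with j by lia.
    apply Nat.le_trans with (beta ^ j)%nat; [apply Nat.pow_le_mono_l; lia|].
    assert (1 <= A * k0)%nat by nia. remember (beta ^ j)%nat as X. nia. }
  pose proof (sq_le_pow2 j). pose proof (pos_INR j).
  assert (2 * INR j <= (1 - s) * INR (level_exp (j - 1))).
  { apply Rle_trans with ((1 - s) * 2 ^ j); [|apply Rmult_le_compat_l; lra].
    apply Rmult_le_reg_r with 2; [lra|]. nra. }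
  assert (Hl2 : 0 < ln 2) by (apply ln_gt1_pos; lra).
  rewrite cell_len_eq. unfold Rpower. rewrite ln_Rinv, ln_pow by (try apply pow_lt; lra).
  replace 4 with (2 ^ 2) by (simpl; lra). rewrite <- pow_mult, pow2_exp, <- exp_plus.
  apply Rle_trans with (exp 0); [apply exp_le_mono|rewrite exp_0; lra].
  rewrite mult_INR. simpl (INR 2).
  assert (2 * INR j * ln 2 <= (1 - s) * INR (level_exp (j - 1)) * ln 2)
    by (apply Rmult_le_compat_r; lra).
  lra.
Qed.

End Application.

Lemma null_subset s (E F : R -> Prop) :
  (forall x, E x -> F x) -> hausdorff_null s F -> hausdorff_null s E.
Proof.
  intros HEF HF delta eps Hd He. destruct (HF delta eps Hd He) as [U [r [Hr [Hcov Hsum]]]].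
  exists U, r. split; [|split]; auto.
Qed.

(* With the convention of [hausdorff_null], no set is H^0-null: a cover has
   at least one set, which contributes (r 0)^0 = 1. *)
Lemma not_null_at_zero (E : R -> Prop) : ~ hausdorff_null 0 E.
Proof.
  intros Hnull. destruct (Hnull 1 1) as [U [r [Hr [_ Hsum]]]]; try lra.
  specialize (Hsum 0%nat). simpl in Hsum. rewrite Rpower_O in Hsum by apply Hr. lra.
Qed.

Lemma hausdorff_dim_one (E : R -> Prop) :
  (forall s, 0 < s < 1 -> ~ hausdorff_null s E) -> hausdorff_dim E 1.
Proof.
  intros Hlow. split.
  - intros s Hs0 Hnull. apply Rnot_lt_le. intros Hs1.
    destruct (Req_dec s 0) as [->|Hs]; [exact (not_null_at_zero E Hnull)|].
    apply (Hlow s); auto. lra.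
  - intros b Hb. apply Rnot_lt_le. intros Hb1.
    pose proof (Hb ((1 + b) / 2) ltac:(lra) (null_for_gt_one ((1 + b) / 2) E ltac:(lra))). lra.
Qed.

Lemma nat_ge_of_INR (k m : nat) : INR m < INR k -> (m <= k)%nat.
Proof. intros H. destruct (Nat.lt_ge_cases k m); auto. apply lt_INR in H0. lra. Qed.

Lemma parameters_exist (C1 C2 gamma : R) : 0 < C1 -> 0 < gamma ->
  exists k0 beta A : nat, (4 <= k0)%nat /\ (2 <= beta)%nat /\ (6 <= A)%nat /\
    gamma + 3 <= INR k0 /\ INR k0 + 1 <= gamma * INR beta /\
    C2 / C_theorem beta <= 2 ^ A /\ 1 <= C1 * 2 ^ A.
Proof.
  intros hC1 hgamma.
  destruct (INR_unbounded (gamma + 4)) as [k0 Hk0].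
  assert (Hk04 : (4 <= k0)%nat) by (apply nat_ge_of_INR; simpl; lra).
  destruct (INR_unbounded ((INR k0 + 1) / gamma + 2)) as [beta Hbeta].
  assert (Hq : 0 < (INR k0 + 1) / gamma) by (apply Rdiv_lt_0_compat; pose proof (pos_INR k0); lra).
  assert (Hb2 : (2 <= beta)%nat) by (apply nat_ge_of_INR; simpl; lra).
  destruct (INR_unbounded (Rmax (C2 / C_theorem beta) (1 / C1) + 6)) as [A HA].
  pose proof (Rmax_l (C2 / C_theorem beta) (1 / C1)). pose proof (Rmax_r (C2 / C_theorem beta) (1 / C1)).
  assert (H1C : 0 < 1 / C1) by (apply Rdiv_lt_0_compat; lra).
  assert (HA6 : (6 <= A)%nat) by (apply nat_ge_of_INR; simpl; lra).
  assert (HpA : INR A <= 2 ^ A).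
  { clear. induction A; [simpl; lra|]. rewrite S_INR. simpl.
    assert (1 <= 2 ^ A) by (apply pow_R1_Rle; lra). lra. }
  exists k0, beta, A. repeat split; auto; try lra.
  - apply Rmult_le_reg_r with (/ gamma); [apply Rinv_0_lt_compat; lra|].
    replace (gamma * INR beta * / gamma) with (INR beta) by (field; lra).
    unfold Rdiv in Hbeta. lra.
  - apply Rmult_le_reg_r with (/ C1); [apply Rinv_0_lt_compat; lra|].
    replace (C1 * 2 ^ A * / C1) with (2 ^ A) by (field; lra). unfold Rdiv in *. lra.
Qed.

(* With C = C_theorem beta and n0 = block_start 2, the set contains the limit
   set of the construction, which is not H^s-null for any s < 1. *)
Theorem theorem7 (C1 C2 gamma : R) (t : nat -> R)
  (hC1 : 0 < C1) (hC2 : 0 < C2) (hgamma : 0 < gamma)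
  (ht : forall n : nat, (1 <= n)%nat ->
          C1 * Rpower (INR n) gamma <= t n <= C2 * Rpower (INR n) gamma) :
  exists (C : R) (n0 : nat), 0 < C /\ (2 <= n0)%nat /\
    hausdorff_dim
      (fun xi : R => forall n : nat, (n0 <= n)%nat ->
         dist_int (xi * t n) > C / (INR n * ln (INR n)))
      1.
Proof.
  destruct (parameters_exist C1 C2 gamma hC1 hgamma)
    as (k0 & beta & A & Hk0 & Hbeta & HA & Hk0g & Hbg & HA2 & HA1).
  exists (C_theorem beta), (block_start beta A 2).
  split; [apply C_theorem_pos; auto|].
  split; [pose proof (block_start_ge3 k0 beta A Hk0 Hbeta HA 2); lia|].
  apply hausdorff_dim_one. intros s Hs Hnull.
  destruct (dimension_condition k0 beta A Hk0 Hbeta HA s Hs) as [J0 HJ0].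
  apply (limit_set_not_null _ (branching_ge4 k0 beta A Hk0 Hbeta HA)
           (bad_cell t k0 beta A) (bad_cell_level0 t k0 beta A) (bad_cell_level1 t k0 beta A)
           (fun j u _ => bad_cell_sparse C1 C2 gamma t hC1 hgamma ht k0 beta A
                           Hk0 Hbeta HA Hk0g Hbg HA2 HA1 j u)
           _ (base_len_pos k0 beta A) s J0 Hs HJ0).
  apply (null_subset _ _ _ (limit_set_in_E C1 C2 gamma t hC1 ht k0 beta A Hk0 Hbeta HA) Hnull).
Qed.
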